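(* Let $a,b\in\mathbb{Z}^+$ with $a$ odd. For every $n\in\mathbb{Z}^+$, $$t(a,3a,4b;4n+6a)=2t(a,12a,b;n),\qquad t(a,3a,4b;4n+3a)=2t(3a,4a,b;n).$$ Moreover, for all complex $q$ with $|q|<1$, $$\sum_{n=0}^{\infty}t(a,3a,4b;4n)q^n=8\varphi(q^{6a})\psi(q^a)\psi(q^b),\qquad \sum_{n=0}^{\infty}t(a,3a,4b;4n+a)q^n=8\varphi(q^{2a})\psi(q^{3a})\psi(q^b).$$
   Context: $\mathbb{Z}^+$ is the set of positive integers. For $a,b,c\in\mathbb{Z}^+$ and nonnegative integer $n$, $t(a,b,c;n)$ denotes the number of triples $(x,y,z)\in\mathbb{Z}^3$ with $n=a\frac{x(x+1)}2+b\frac{y(y+1)}2+c\frac{z(z+1)}2$. Ramanujan's theta functions are $\varphi(q)=\sum_{n=-\infty}^{\infty}q^{n^2}$ and $\psi(q)=\sum_{n=0}^{\infty}q^{n(n+1)/2}$ for $|q|<1$. *)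

From Stdlib Require Import Reals ZArith List Lia.
From Coquelicot Require Import Coquelicot.
Import ListNotations.

(* Triangular number x(x+1)/2 for x : Z (exact division, x(x+1) is even). *)
Definition tri (x : Z) : Z := (x * (x + 1) / 2)%Z.

(* The integers -(N+1), ..., N.  If c >= 1 and c * tri x <= N then
   x lies in this range (tri x >= x for x >= 0, tri x >= -x-1 for x < 0),
   so every solution of n = a tri x + b tri y + c tri z (a,b,c >= 1) has all
   coordinates in box n. *)
Definition box (N : nat) : list Z :=
  map (fun k => (Z.of_nat k - (Z.of_nat N + 1))%Z) (seq 0 (2 * N + 2)).

(* t(a,b,c;n) = #{(x,y,z) in Z^3 | n = a x(x+1)/2 + b y(y+1)/2 + c z(z+1)/2 },
   for a, b, c positive (the count is over the finite box containing all
   solutions, see above). *)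
Definition t (a b c n : nat) : nat :=
  length (filter
    (fun p : Z * Z * Z =>
       let '(x, y, z) := p in
       Z.eqb (Z.of_nat n)
             (Z.of_nat a * tri x + Z.of_nat b * tri y + Z.of_nat c * tri z))
    (list_prod (list_prod (box n) (box n)) (box n))).

(* Sum of a complex series, computed via the real and imaginary parts
   (Coquelicot's Series is real-valued).  For a convergent series this is
   its sum. *)
Definition CSeries (u : nat -> C) : C :=
  (Series (fun k => Re (u k)), Series (fun k => Im (u k))).

(* Ramanujan's phi(q) = sum_{n in Z} q^{n^2}, split as the terms with
   n = k >= 0 plus the terms with n = -(k+1) < 0. *)
Definition ramanujan_phi (q : C) : C :=
  (CSeries (fun k => Cpow q (k * k)) +
   CSeries (fun k => Cpow q ((k + 1) * (k + 1))))%C.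

Definition ramanujan_psi (q : C) : C :=
  CSeries (fun n => Cpow q (n * (n + 1) / 2)).

(** Write T(x) = x(x+1)/2.  The reflection y |-> -1-y fixes T(y) and changes the
    parity of x - y, so t(a,3a,4b;N) is twice the number of solutions of
    a T(x) + 3a T(y) + 4b T(z) = N with x ≡ y (mod 2).  For N = 4n + ra with a odd such a
    solution has T(x) + 3T(y) ≡ r (mod 4), and the pairs x ≡ y (mod 2) with
    T(x) + 3T(y) = 4G + r are parametrised linearly:
      T(u+6v+3) + 3T(u-2v-1) = 4(T(u) + 12T(v)) + 6,
      T(3u+2v+2) + 3T(2v-u)  = 4(3T(u) + 4T(v)) + 3,
      T(w+6s) + 3T(w-2s)     = 4(6s^2 + T(w)),
      T(2s+3w+1) + 3T(2s-w-1) = 4(2s^2 + 3T(w)) + 1.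
    The first two give the identities between the t's.  The last two make t(a,3a,4b;4n)
    and t(a,3a,4b;4n+a) twice the number of representations of n by 6a s^2 + a T(w) + b T(z),
    resp. 2a s^2 + 3a T(w) + b T(z); since T(w) = T(-1-w), the generating function of that
    number is the Cauchy product of the absolutely convergent series phi(q^{6a}),
    2 psi(q^a), 2 psi(q^b), resp. phi(q^{2a}), 2 psi(q^{3a}), 2 psi(q^b). *)

From Stdlib Require Import Reals ZArith Lia Lra List Permutation.
From Coquelicot Require Import Coquelicot.
Import ListNotations.

Definition has_card {A : Type} (P : A -> Prop) (m : nat) : Prop :=
  exists l : list A, NoDup l /\ (forall x, In x l <-> P x) /\ length l = m.

Section HasCard.
Context {A B : Type}.

Lemma has_card_unique (P : A -> Prop) m1 m2 :
  has_card P m1 -> has_card P m2 -> m1 = m2.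
Proof.
  intros [l1 (N1 & I1 & <-)] [l2 (N2 & I2 & <-)].
  apply Permutation_length, NoDup_Permutation; auto.
  intros x. rewrite I1, I2. reflexivity.
Qed.

Lemma has_card_ext (P Q : A -> Prop) m :
  (forall x, P x <-> Q x) -> has_card P m -> has_card Q m.
Proof.
  intros PQ [l (N & I & L)]. exists l. repeat split; auto.
  - intros Hx. apply PQ, I, Hx.
  - intros Hx. apply I, PQ, Hx.
Qed.

Lemma has_card_filter (P : A -> Prop) (f : A -> bool) (l : list A) :
  NoDup l -> (forall x, P x -> In x l) -> (forall x, f x = true <-> P x) ->
  has_card P (length (filter f l)).
Proof.
  intros N Pl fP. exists (filter f l). repeat split.
  - apply NoDup_filter, N.
  - rewrite filter_In. intros [_ fx]. apply fP, fx.
  - intros Px. apply filter_In. split; [apply Pl, Px | apply fP, Px].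
Qed.

Lemma has_card_0 (P : A -> Prop) : (forall x, ~ P x) -> has_card P 0.
Proof.
  intros nP. exists []. repeat split; [constructor | intros [] | apply nP].
Qed.

Lemma has_card_1 (P : A -> Prop) a : (forall x, P x <-> x = a) -> has_card P 1.
Proof.
  intros Pa. exists [a]. repeat split.
  - repeat constructor. intros [].
  - intros [<- | []]. apply Pa. reflexivity.
  - intros Px. left. symmetry. apply Pa, Px.
Qed.

Lemma has_card_union (P Q : A -> Prop) m1 m2 :
  has_card P m1 -> has_card Q m2 -> (forall x, P x -> Q x -> False) ->
  has_card (fun x => P x \/ Q x) (m1 + m2).
Proof.
  intros [l1 (N1 & I1 & <-)] [l2 (N2 & I2 & <-)] PQ. exists (l1 ++ l2). repeat split.
  - apply NoDup_app; auto. intros x H1 H2. apply (PQ x); [apply I1 | apply I2]; auto.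
  - rewrite in_app_iff, I1, I2. auto.
  - rewrite in_app_iff, I1, I2. auto.
  - apply length_app.
Qed.

Lemma has_card_bij (P : A -> Prop) (Q : B -> Prop) (g : B -> A) m :
  has_card Q m -> (forall y, Q y -> P (g y)) ->
  (forall y1 y2, Q y1 -> Q y2 -> g y1 = g y2 -> y1 = y2) ->
  (forall x, P x -> exists y, Q y /\ x = g y) -> has_card P m.
Proof.
  intros [l (N & I & <-)] gQP g_inj g_onto. exists (map g l). repeat split.
  - apply NoDup_map_NoDup_ForallPairs; auto.
    intros y1 y2 H1 H2. apply g_inj; apply I; auto.
  - rewrite in_map_iff. intros (y & <- & Hy). apply gQP, I, Hy.
  - intros Px. apply in_map_iff. destruct (g_onto x Px) as (y & Qy & ->).
    exists y. split; [reflexivity | apply I, Qy].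
  - apply length_map.
Qed.

Lemma NoDup_list_prod (l1 : list A) (l2 : list B) :
  NoDup l1 -> NoDup l2 -> NoDup (list_prod l1 l2).
Proof.
  intros N1 N2. induction N1 as [| x l1 Hx N1 IH]; cbn; [constructor |].
  apply NoDup_app; auto.
  - apply NoDup_map_NoDup_ForallPairs; auto. intros y1 y2 _ _ E. injection E; auto.
  - intros p Hp Hp'. apply in_map_iff in Hp as (y & <- & _).
    apply in_prod_iff in Hp' as [Hx' _]. contradiction.
Qed.

Lemma has_card_prod (P : A -> Prop) (Q : B -> Prop) m1 m2 :
  has_card P m1 -> has_card Q m2 ->
  has_card (fun p => P (fst p) /\ Q (snd p)) (m1 * m2).
Proof.
  intros [l1 (N1 & I1 & <-)] [l2 (N2 & I2 & <-)]. exists (list_prod l1 l2). split; [| split].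
  - apply NoDup_list_prod; auto.
  - intros [x y]. rewrite in_prod_iff, I1, I2. reflexivity.
  - apply length_prod.
Qed.

End HasCard.

Lemma has_card_double {A : Type} (P E : A -> Prop) (s : A -> A) m :
  (forall x, P x -> P (s x)) -> (forall x, s (s x) = x) ->
  (forall x, P x -> E x \/ E (s x)) -> (forall x, P x -> E x -> E (s x) -> False) ->
  has_card (fun x => P x /\ E x) m -> has_card P (2 * m).
Proof.
  intros Ps ss EsE excl HE. replace (2 * m)%nat with (m + m)%nat by lia.
  eapply has_card_ext; [| apply has_card_union with (Q := fun x => P x /\ E (s x));
    [exact HE | eapply has_card_bij with (g := s); [exact HE | .. ] | ]].
  - intros x. split; [intros [[Px _] | [Px _]]; exact Px |].
    intros Px. destruct (EsE x Px); auto.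
  - intros x [Px Ex]. rewrite ss. auto.
  - intros x1 x2 _ _ E12. rewrite <- (ss x1), E12. apply ss.
  - intros x [Px Esx]. exists (s x). rewrite ss. auto.
  - intros x [Px Ex] [_ Esx]. exact (excl x Px Ex Esx).
Qed.

Fixpoint nat_sum (f : nat -> nat) (k : nat) : nat :=
  match k with O => f O | S k' => nat_sum f k' + f k end%nat.

Definition nat_conv (c d : nat -> nat) (n : nat) : nat :=
  nat_sum (fun i => c i * d (n - i))%nat n.

Open Scope Z_scope.

Definition fiber_card {A : Type} (h : A -> Z) (c : nat -> nat) : Prop :=
  forall i : nat, has_card (fun x => h x = Z.of_nat i) (c i).

Lemma fiber_card_add {A B : Type} (h1 : A -> Z) (h2 : B -> Z) c1 c2 :
  (forall x, 0 <= h1 x) -> (forall y, 0 <= h2 y) ->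
  fiber_card h1 c1 -> fiber_card h2 c2 ->
  fiber_card (fun p => h1 (fst p) + h2 (snd p)) (nat_conv c1 c2).
Proof.
  intros h1_ge0 h2_ge0 Hc1 Hc2 n.
  assert (partial : forall k, (k <= n)%nat ->
    has_card (fun p => h1 (fst p) + h2 (snd p) = Z.of_nat n /\ h1 (fst p) <= Z.of_nat k)
      (nat_sum (fun i => c1 i * c2 (n - i))%nat k)).
  { induction k as [| k IH]; intros Hk; cbn [nat_sum].
    - eapply has_card_ext; [| apply has_card_prod; [apply (Hc1 0%nat) | apply (Hc2 (n - 0)%nat)]].
      intros [x y]; cbn. rewrite Nat.sub_0_r. specialize (h1_ge0 x). lia.
    - eapply has_card_ext; [| apply has_card_union;
        [apply IH; lia | apply has_card_prod; [apply (Hc1 (S k)) | apply (Hc2 (n - S k)%nat)] |]].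
      + intros [x y]; cbn. rewrite Nat2Z.inj_sub by exact Hk. lia.
      + intros [x y]; cbn. lia. }
  eapply has_card_ext; [| apply (partial n); lia].
  intros [x y]; cbn. specialize (h2_ge0 y). lia.
Qed.

Lemma tri_double x : 2 * tri x = x * (x + 1).
Proof.
  unfold tri. destruct (Z.Even_or_Odd x) as [[k ->] | [k ->]].
  - replace (2 * k * (2 * k + 1)) with (k * (2 * k + 1) * 2) by ring.
    rewrite Z.div_mul by lia. ring.
  - replace ((2 * k + 1) * (2 * k + 1 + 1)) with ((2 * k + 1) * (k + 1) * 2) by ring.
    rewrite Z.div_mul by lia. ring.
Qed.

Lemma tri_bounds x : 0 <= tri x /\ x <= tri x /\ - x - 1 <= tri x.
Proof. pose proof (tri_double x). destruct (Z_le_gt_dec 0 x); nia. Qed.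

Lemma tri_reflect x : tri (- x - 1) = tri x.
Proof. pose proof (tri_double x). pose proof (tri_double (- x - 1)). nia. Qed.

Lemma tri_add_even y k : tri (y + 2 * k) + 3 * tri y = 4 * tri y + k * (2 * y + 2 * k + 1).
Proof. pose proof (tri_double y). pose proof (tri_double (y + 2 * k)). nia. Qed.

Lemma in_box N x : In x (box N) <-> - (Z.of_nat N + 1) <= x <= Z.of_nat N.
Proof.
  unfold box. rewrite in_map_iff. split.
  - intros (k & <- & Hk). apply in_seq in Hk. lia.
  - intros Hx. exists (Z.to_nat (x + Z.of_nat N + 1)). split; [lia |]. apply in_seq. lia.
Qed.

Lemma NoDup_box N : NoDup (box N).
Proof.
  apply NoDup_map_NoDup_ForallPairs; [| apply seq_NoDup].
  intros k1 k2 _ _ E. lia.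
Qed.

Definition tri_form (A B C : Z) (p : Z * Z * Z) : Z :=
  let '(x, y, z) := p in A * tri x + B * tri y + C * tri z.

Lemma t_has_card A B C n : (0 < A)%nat -> (0 < B)%nat -> (0 < C)%nat ->
  has_card (fun p => tri_form (Z.of_nat A) (Z.of_nat B) (Z.of_nat C) p = Z.of_nat n)
    (t A B C n).
Proof.
  intros HA HB HC. apply has_card_filter.
  - repeat apply NoDup_list_prod; apply NoDup_box.
  - intros [[x y] z] E. cbn [tri_form] in E.
    destruct (tri_bounds x) as (? & ? & ?), (tri_bounds y) as (? & ? & ?),
      (tri_bounds z) as (? & ? & ?).
    repeat (apply in_prod_iff; split); apply in_box; nia.
  - intros [[x y] z]. rewrite Z.eqb_eq. split; intros E; symmetry; exact E.
Qed.

Definition xy_even (p : Z * Z * Z) : Prop := let '(x, y, _) := p in Z.Even (x - y).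

Lemma t_eq_double A B C n m : (0 < A)%nat -> (0 < B)%nat -> (0 < C)%nat ->
  has_card (fun p => tri_form (Z.of_nat A) (Z.of_nat B) (Z.of_nat C) p = Z.of_nat n
                     /\ xy_even p) m ->
  t A B C n = (2 * m)%nat.
Proof.
  intros HA HB HC Hm. apply (has_card_unique _ _ _ (t_has_card A B C n HA HB HC)).
  apply (has_card_double _ xy_even (fun '(x, y, z) => (x, - y - 1, z)) m); [.. | exact Hm].
  - intros [[x y] z]. cbn. rewrite tri_reflect. auto.
  - intros [[x y] z]. cbn. f_equal. f_equal. lia.
  - intros [[x y] z] _. cbn.
    destruct (Z.Even_or_Odd (x - y)) as [| [k Hk]]; [left; assumption | right].
    exists (k + y + 1). lia.
  - intros [[x y] z] _ [k1 H1] [k2 H2]. lia.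
Qed.

Lemma odd_mul_eq_mod4 a F M r : Z.Odd a -> a * F = 4 * M + a * r -> exists K, F = 4 * K + r.
Proof. intros [c ->] E. exists ((2 * c + 1) * M - (c * c + c) * (F - r)). nia. Qed.

Section EvenSolutions.

Variables (a b r n : Z) (G gx gy : Z -> Z -> Z).
Hypothesis a_odd : Z.Odd a.
Hypothesis g_even : forall u v, Z.Even (gx u v - gy u v).
Hypothesis g_tri : forall u v, tri (gx u v) + 3 * tri (gy u v) = 4 * G u v + r.
Hypothesis g_inj : forall u v u' v', gx u v = gx u' v' -> gy u v = gy u' v' -> u = u' /\ v = v'.
Hypothesis g_onto : forall x y K, Z.Even (x - y) -> tri x + 3 * tri y = 4 * K + r ->
  exists u v, x = gx u v /\ y = gy u v.

Lemma has_card_even_solutions m :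
  has_card (fun '(u, v, z) => a * G u v + b * tri z = n) m ->
  has_card (fun p => tri_form a (3 * a) (4 * b) p = 4 * n + a * r /\ xy_even p) m.
Proof.
  intros Hm. apply (has_card_bij _ _ (fun '(u, v, z) => (gx u v, gy u v, z)) m Hm).
  - intros [[u v] z] E. cbn [tri_form xy_even]. split; [| apply g_even].
    transitivity (a * (tri (gx u v) + 3 * tri (gy u v)) + 4 * b * tri z); [ring |].
    rewrite g_tri, <- E. ring.
  - intros [[u v] z] [[u' v'] z'] _ _ E. injection E as Ex Ey ->.
    destruct (g_inj u v u' v' Ex Ey) as [-> ->]. reflexivity.
  - intros [[x y] z] [E Hxy]. cbn [tri_form xy_even] in E, Hxy.
    destruct (odd_mul_eq_mod4 a (tri x + 3 * tri y) (n - b * tri z) r a_odd) as [K HK];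
      [lia |].
    destruct (g_onto x y K Hxy HK) as (u & v & -> & ->).
    exists (u, v, z). split; [| reflexivity].
    pose proof (g_tri u v). nia.
Qed.

End EvenSolutions.

Lemma Z_Odd_of_nat a : Nat.odd a = true -> Z.Odd (Z.of_nat a).
Proof. intros Ha. apply Nat.odd_spec in Ha as [c ->]. exists (Z.of_nat c). lia. Qed.

Definition sq_tri_form (A B C : Z) (p : Z * Z * Z) : Z :=
  let '(s, w, z) := p in A * (s * s) + B * tri w + C * tri z.

(* In each [g_onto] step below, [tri_add_even] turns the congruence into
   [k (2y + 2k + 1) ≡ r (mod 4)] for [x = y + 2k]; as [2y + 2k + 1] is odd this fixes [k]
   mod 4 when [r] is even, and fixes [k] odd and [y + (k-1)/2] mod 2 when [r] is odd. *)
Lemma t_4n_6a a b n : (0 < a)%nat -> (0 < b)%nat -> Nat.odd a = true ->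
  t a (3 * a) (4 * b) (4 * n + 6 * a) = (2 * t a (12 * a) b n)%nat.
Proof.
  intros Ha Hb Hodd. apply t_eq_double; try lia.
  eapply has_card_ext; [| apply (has_card_even_solutions (Z.of_nat a) (Z.of_nat b) 6 (Z.of_nat n)
    (fun u v => tri u + 12 * tri v) (fun u v => u + 6 * v + 3) (fun u v => u - 2 * v - 1))].
  - intros [[x y] z]. cbn [tri_form]. apply and_iff_compat_r. lia.
  - apply Z_Odd_of_nat, Hodd.
  - intros u v. exists (4 * v + 2). lia.
  - intros u v. pose proof (tri_double u); pose proof (tri_double v);
      pose proof (tri_double (u + 6 * v + 3)); pose proof (tri_double (u - 2 * v - 1)). lia.
  - intros u v u' v' Ex Ey. lia.
  - intros x y K [k Hk] E. replace x with (y + 2 * k) in E by lia. rewrite tri_add_even in E.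
    destruct (Z.Even_or_Odd k) as [[s ->] | [s ->]]; [| lia].
    destruct (Z.Even_or_Odd s) as [[j ->] | [j ->]]; [lia |].
    exists (y + 2 * j + 1), j. lia.
  - eapply has_card_ext; [| apply t_has_card; lia].
    intros [[u v] z]. cbn [tri_form]. lia.
Qed.

Lemma t_4n_3a a b n : (0 < a)%nat -> (0 < b)%nat -> Nat.odd a = true ->
  t a (3 * a) (4 * b) (4 * n + 3 * a) = (2 * t (3 * a) (4 * a) b n)%nat.
Proof.
  intros Ha Hb Hodd. apply t_eq_double; try lia.
  eapply has_card_ext; [| apply (has_card_even_solutions (Z.of_nat a) (Z.of_nat b) 3 (Z.of_nat n)
    (fun u v => 3 * tri u + 4 * tri v) (fun u v => 3 * u + 2 * v + 2) (fun u v => 2 * v - u))].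
  - intros [[x y] z]. cbn [tri_form]. apply and_iff_compat_r. lia.
  - apply Z_Odd_of_nat, Hodd.
  - intros u v. exists (2 * u + 1). lia.
  - intros u v. pose proof (tri_double u); pose proof (tri_double v);
      pose proof (tri_double (3 * u + 2 * v + 2)); pose proof (tri_double (2 * v - u)). lia.
  - intros u v u' v' Ex Ey. lia.
  - intros x y K [k Hk] E. replace x with (y + 2 * k) in E by lia. rewrite tri_add_even in E.
    destruct (Z.Even_or_Odd k) as [[s ->] | [s ->]]; [lia |].
    destruct (Z.Even_or_Odd (y + s)) as [[j Hj] | [j Hj]]; [| lia].
    exists s, j. lia.
  - eapply has_card_ext; [| apply t_has_card; lia].
    intros [[u v] z]. cbn [tri_form]. lia.
Qed.

Lemma t_4n a b n m : (0 < a)%nat -> (0 < b)%nat -> Nat.odd a = true ->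
  has_card (fun p => sq_tri_form (Z.of_nat (6 * a)) (Z.of_nat a) (Z.of_nat b) p = Z.of_nat n) m ->
  t a (3 * a) (4 * b) (4 * n) = (2 * m)%nat.
Proof.
  intros Ha Hb Hodd Hm. apply t_eq_double; try lia.
  eapply has_card_ext; [| apply (has_card_even_solutions (Z.of_nat a) (Z.of_nat b) 0 (Z.of_nat n)
    (fun s w => 6 * (s * s) + tri w) (fun s w => w + 6 * s) (fun s w => w - 2 * s))].
  - intros [[x y] z]. cbn [tri_form]. apply and_iff_compat_r. lia.
  - apply Z_Odd_of_nat, Hodd.
  - intros s w. exists (4 * s). lia.
  - intros s w. pose proof (tri_double w);
      pose proof (tri_double (w + 6 * s)); pose proof (tri_double (w - 2 * s)). lia.
  - intros s w s' w' Ex Ey. lia.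
  - intros x y K [k Hk] E. replace x with (y + 2 * k) in E by lia. rewrite tri_add_even in E.
    destruct (Z.Even_or_Odd k) as [[j ->] | [j ->]]; [| lia].
    destruct (Z.Even_or_Odd j) as [[s ->] | [s ->]]; [| lia].
    exists s, (y + 2 * s). lia.
  - eapply has_card_ext; [| exact Hm].
    intros [[s w] z]. cbn [sq_tri_form]. lia.
Qed.

Lemma t_4n_a a b n m : (0 < a)%nat -> (0 < b)%nat -> Nat.odd a = true ->
  has_card (fun p => sq_tri_form (Z.of_nat (2 * a)) (Z.of_nat (3 * a)) (Z.of_nat b) p
                     = Z.of_nat n) m ->
  t a (3 * a) (4 * b) (4 * n + a) = (2 * m)%nat.
Proof.
  intros Ha Hb Hodd Hm. apply t_eq_double; try lia.
  eapply has_card_ext; [| apply (has_card_even_solutions (Z.of_nat a) (Z.of_nat b) 1 (Z.of_nat n)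
    (fun s w => 2 * (s * s) + 3 * tri w) (fun s w => 2 * s + 3 * w + 1)
    (fun s w => 2 * s - w - 1))].
  - intros [[x y] z]. cbn [tri_form]. apply and_iff_compat_r. lia.
  - apply Z_Odd_of_nat, Hodd.
  - intros s w. exists (2 * w + 1). lia.
  - intros s w. pose proof (tri_double w);
      pose proof (tri_double (2 * s + 3 * w + 1)); pose proof (tri_double (2 * s - w - 1)). lia.
  - intros s w s' w' Ex Ey. lia.
  - intros x y K [k Hk] E. replace x with (y + 2 * k) in E by lia. rewrite tri_add_even in E.
    destruct (Z.Even_or_Odd k) as [[w ->] | [w ->]]; [lia |].
    destruct (Z.Even_or_Odd (y + w)) as [[j Hj] | [j Hj]]; [lia |].
    exists (j + 1), w. lia.
  - eapply has_card_ext; [| exact Hm].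
    intros [[s w] z]. cbn [sq_tri_form]. lia.
Qed.

Open Scope nat_scope.

Definition strictly_increasing (E : nat -> nat) : Prop := forall k, E k < E (S k).

(* Searching [k <= n] suffices when [E] is strictly increasing, as then [E k >= k]. *)
Definition range_ind (E : nat -> nat) (n : nat) : nat :=
  if existsb (fun k => E k =? n) (seq 0 (S n)) then 1 else 0.

Section StrictlyIncreasing.

Variable E : nat -> nat.
Hypothesis E_incr : strictly_increasing E.

Lemma incr_lt i j : i < j -> E i < E j.
Proof.
  induction j as [| j IH]; intros Hij; [lia |].
  specialize (E_incr j). destruct (Nat.eq_dec i j) as [-> | ]; [| specialize (IH ltac:(lia))]; lia.
Qed.

Lemma incr_ge_id k : k <= E k.
Proof. induction k as [| k IH]; [lia |]. specialize (E_incr k). lia. Qed.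

Lemma incr_inj i j : E i = E j -> i = j.
Proof.
  intros Eij. destruct (Nat.lt_trichotomy i j) as [Hlt | [-> | Hlt]];
    [apply incr_lt in Hlt | | apply incr_lt in Hlt]; lia.
Qed.

Lemma range_indP n :
  (range_ind E n = 1 /\ exists k, E k = n) \/ (range_ind E n = 0 /\ forall k, E k <> n).
Proof.
  unfold range_ind. destruct (existsb _ _) eqn:Hex; [left | right]; split; auto.
  - apply existsb_exists in Hex as (k & _ & Hk). apply Nat.eqb_eq in Hk. eauto.
  - intros k Hk. enough (existsb (fun k => E k =? n) (seq 0 (S n)) = true) by congruence.
    apply existsb_exists. exists k. split; [apply in_seq | apply Nat.eqb_eq]; auto.
    pose proof (incr_ge_id k). lia.
Qed.

Lemma range_ind_le_1 n : range_ind E n <= 1.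
Proof. destruct (range_indP n) as [[-> _] | [-> _]]; lia. Qed.

Lemma has_card_range_ind {A : Type} (emb : nat -> A) (P : A -> Prop) n :
  (forall i j, emb i = emb j -> i = j) ->
  (forall x, P x <-> exists k, x = emb k /\ E k = n) -> has_card P (range_ind E n).
Proof.
  intros emb_inj HP. destruct (range_indP n) as [[-> [k Hk]] | [-> Hk]].
  - apply (has_card_1 _ (emb k)). intros x. rewrite HP. split.
    + intros (k' & -> & Hk'). f_equal. apply incr_inj. congruence.
    + intros ->. eauto.
  - apply has_card_0. intros x Hx. apply HP in Hx as (k & _ & Hk'). exact (Hk k Hk').
Qed.

End StrictlyIncreasing.

Lemma fiber_card_split (h : Z -> Z) (Ep En : nat -> nat) :
  strictly_increasing Ep -> strictly_increasing En ->
  (forall k, h (Z.of_nat k) = Z.of_nat (Ep k)) ->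
  (forall k, h (- Z.of_nat k - 1)%Z = Z.of_nat (En k)) ->
  fiber_card h (fun i => range_ind Ep i + range_ind En i).
Proof.
  intros Ep_incr En_incr hp hn i.
  eapply has_card_ext; [| apply has_card_union with
    (P := fun x => (0 <= x)%Z /\ h x = Z.of_nat i) (Q := fun x => (x < 0)%Z /\ h x = Z.of_nat i)].
  - intros x. lia.
  - apply (has_card_range_ind Ep Ep_incr Z.of_nat); [lia |].
    intros x. split.
    + intros [Hx E]. exists (Z.to_nat x). rewrite Z2Nat.id by exact Hx.
      split; [reflexivity |]. apply Nat2Z.inj. rewrite <- hp, Z2Nat.id; assumption.
    + intros (k & -> & <-). split; [lia | apply hp].
  - apply (has_card_range_ind En En_incr (fun k => - Z.of_nat k - 1)%Z); [lia |].
    intros x. split.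
    + intros [Hx E]. exists (Z.to_nat (- x - 1)). rewrite Z2Nat.id by lia.
      split; [lia |]. apply Nat2Z.inj. rewrite <- hn, Z2Nat.id by lia.
      replace (- (- x - 1) - 1)%Z with x by lia. exact E.
    + intros (k & -> & <-). split; [lia | apply hn].
  - intros x [Hx _] [Hx' _]. lia.
Qed.

Definition sq_seq (m k : nat) : nat := m * (k * k).
Definition sq_succ_seq (m k : nat) : nat := m * ((k + 1) * (k + 1)).
Definition tri_seq (m k : nat) : nat := m * (k * (k + 1) / 2).

Definition sq_count (m i : nat) : nat := range_ind (sq_seq m) i + range_ind (sq_succ_seq m) i.
Definition tri_count (m i : nat) : nat := range_ind (tri_seq m) i + range_ind (tri_seq m) i.

Lemma sq_seq_incr m : 0 < m -> strictly_increasing (sq_seq m).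
Proof. intros Hm k. unfold sq_seq. nia. Qed.

Lemma sq_succ_seq_incr m : 0 < m -> strictly_increasing (sq_succ_seq m).
Proof. intros Hm k. unfold sq_succ_seq. nia. Qed.

Lemma tri_of_nat k : tri (Z.of_nat k) = Z.of_nat (k * (k + 1) / 2).
Proof. unfold tri. rewrite Nat2Z.inj_div, Nat2Z.inj_mul, Nat2Z.inj_add. reflexivity. Qed.

Lemma tri_seq_incr m : 0 < m -> strictly_increasing (tri_seq m).
Proof.
  intros Hm k. unfold tri_seq. apply Nat.mul_lt_mono_pos_l; [exact Hm |].
  apply Nat2Z.inj_lt. rewrite <- !tri_of_nat.
  pose proof (tri_double (Z.of_nat k)). pose proof (tri_double (Z.of_nat (S k))). nia.
Qed.

Lemma fiber_card_sq m : 0 < m -> fiber_card (fun s => Z.of_nat m * (s * s))%Z (sq_count m).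
Proof.
  intros Hm. apply fiber_card_split; [apply sq_seq_incr | apply sq_succ_seq_incr | |];
    auto; intros k; unfold sq_seq, sq_succ_seq; lia.
Qed.

Lemma fiber_card_tri m : 0 < m -> fiber_card (fun w => Z.of_nat m * tri w)%Z (tri_count m).
Proof.
  intros Hm. apply fiber_card_split; [apply tri_seq_incr | apply tri_seq_incr | |];
    auto; intros k; unfold tri_seq; [| rewrite tri_reflect]; rewrite tri_of_nat; lia.
Qed.

Lemma fiber_card_sq_tri_form k1 k2 k3 : 0 < k1 -> 0 < k2 -> 0 < k3 ->
  fiber_card (sq_tri_form (Z.of_nat k1) (Z.of_nat k2) (Z.of_nat k3))
    (nat_conv (nat_conv (sq_count k1) (tri_count k2)) (tri_count k3)).
Proof.
  intros H1 H2 H3 i. eapply has_card_ext; [| apply (fiber_card_add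
    (fun p => Z.of_nat k1 * (fst p * fst p) + Z.of_nat k2 * tri (snd p))%Z
    (fun z => Z.of_nat k3 * tri z)%Z)].
  - intros [[s w] z]. reflexivity.
  - intros [s w]. cbn. pose proof (tri_bounds w). nia.
  - intros z. pose proof (tri_bounds z). nia.
  - apply (fiber_card_add (fun s => Z.of_nat k1 * (s * s))%Z (fun w => Z.of_nat k2 * tri w)%Z);
      [nia | intros w; pose proof (tri_bounds w); nia |
       apply fiber_card_sq, H1 | apply fiber_card_tri, H2].
  - apply fiber_card_tri, H3.
Qed.

Open Scope R_scope.

Lemma im_le_Cmod (z : C) : Rabs (Im z) <= Cmod z.
Proof.
  pose proof (Cmod2_alt z). pose proof (Cmod_ge_0 z).
  unfold Rabs. destruct (Rcase_abs (Im z)); nra.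
Qed.

Lemma Re_mult (z w : C) : Re (z * w)%C = Re z * Re w - Im z * Im w.
Proof. destruct z, w. cbn. ring. Qed.

Lemma Im_mult (z w : C) : Im (z * w)%C = Re z * Im w + Im z * Re w.
Proof. destruct z, w. cbn. ring. Qed.

Lemma sum_n_C (u : nat -> C) n :
  sum_n u n = (sum_n (fun k => Re (u k)) n, sum_n (fun k => Im (u k)) n).
Proof.
  induction n as [| n IH].
  - rewrite !sum_O. destruct (u 0%nat). reflexivity.
  - rewrite !sum_Sn, IH. destruct (u (S n)). reflexivity.
Qed.

Lemma is_series_C (u : nat -> C) L :
  is_series (fun n => Re (u n)) (Re L) -> is_series (fun n => Im (u n)) (Im L) ->
  is_series u L.
Proof.
  intros HRe HIm. apply filterlim_locally. intros eps.
  destruct (proj1 (filterlim_locally _ _) HRe eps) as [N1 HN1].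
  destruct (proj1 (filterlim_locally _ _) HIm eps) as [N2 HN2].
  exists (max N1 N2). intros n Hn. rewrite sum_n_C.
  split; [apply HN1 | apply HN2]; lia.
Qed.

Lemma ex_series_Rabs_le (u v : nat -> R) :
  (forall n, Rabs (u n) <= v n) -> ex_series v -> ex_series (fun n => Rabs (u n)).
Proof.
  intros Huv. apply (@ex_series_le R_AbsRing R_CompleteNormedModule).
  intros n. change (Rabs (Rabs (u n)) <= v n). rewrite Rabs_Rabsolu. apply Huv.
Qed.

Lemma ex_series_geom_le (u : nat -> R) r : 0 <= r < 1 ->
  (forall n, Rabs (u n) <= r ^ n) -> ex_series u.
Proof.
  intros Hr Hu. apply (@ex_series_le R_AbsRing R_CompleteNormedModule _ (fun n => r ^ n)).
  - exact Hu.
  - exists (/ (1 - r)). apply is_series_geom. rewrite Rabs_right; lra.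
Qed.

(* [L = sum_n c n q^n], split into real and imaginary parts; absolute convergence is
   recorded so that Cauchy products of such series converge to the product. *)
Definition is_gf (c : nat -> nat) (q L : C) : Prop :=
  is_series (fun n => INR (c n) * Re (Cpow q n)) (Re L) /\
  is_series (fun n => INR (c n) * Im (Cpow q n)) (Im L) /\
  ex_series (fun n => INR (c n) * Cmod q ^ n).

Lemma is_gf_ext c d q L : (forall n, c n = d n) -> is_gf c q L -> is_gf d q L.
Proof.
  intros cd (HRe & HIm & Habs). repeat split.
  - eapply is_series_ext; [| exact HRe]. intros n. cbv beta. rewrite cd. reflexivity.
  - eapply is_series_ext; [| exact HIm]. intros n. cbv beta. rewrite cd. reflexivity.
  - eapply ex_series_ext; [| exact Habs]. intros n. cbv beta. rewrite cd. reflexivity.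
Qed.

Lemma is_gf_plus c d q A B :
  is_gf c q A -> is_gf d q B -> is_gf (fun n => c n + d n)%nat q (A + B)%C.
Proof.
  intros (HRe & HIm & Habs) (GRe & GIm & Gabs). repeat split.
  - eapply is_series_ext; [| exact (is_series_plus _ _ _ _ HRe GRe)].
    intros n. rewrite plus_INR. cbn. ring.
  - eapply is_series_ext; [| exact (is_series_plus _ _ _ _ HIm GIm)].
    intros n. rewrite plus_INR. cbn. ring.
  - eapply ex_series_ext; [| exact (ex_series_plus _ _ Habs Gabs)].
    intros n. rewrite plus_INR. cbn. ring.
Qed.

Lemma is_gf_scal k c q L : is_gf c q L -> is_gf (fun n => k * c n)%nat q (INR k * L)%C.
Proof.
  intros (HRe & HIm & Habs). repeat split.
  - replace (Re (INR k * L)%C) with (INR k * Re L) by (destruct L; cbn; ring).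
    eapply is_series_ext; [| exact (is_series_scal_l (INR k) _ _ HRe)].
    intros n. rewrite mult_INR. cbn. ring.
  - replace (Im (INR k * L)%C) with (INR k * Im L) by (destruct L; cbn; ring).
    eapply is_series_ext; [| exact (is_series_scal_l (INR k) _ _ HIm)].
    intros n. rewrite mult_INR. cbn. ring.
  - eapply ex_series_ext; [| exact (ex_series_scal_l (INR k) _ Habs)].
    intros n. rewrite mult_INR. cbn. ring.
Qed.

Lemma INR_nat_conv c d n :
  INR (nat_conv c d n) = sum_f_R0 (fun k => INR (c k) * INR (d (n - k)%nat)) n.
Proof.
  unfold nat_conv. generalize n at 2 4. intros m.
  induction m as [| m IH]; cbn [nat_sum sum_f_R0]; rewrite ?plus_INR, ?IH, mult_INR; reflexivity.
Qed.

Lemma Rabs_part_pow_le (part : C -> R) q n : (forall z, Rabs (part z) <= Cmod z) ->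
  Rabs (part (q ^ n)%C) <= Cmod q ^ n.
Proof. intros Hpart. rewrite <- Cmod_pow. apply Hpart. Qed.

Lemma is_gf_conv c d q A B : is_gf c q A -> is_gf d q B -> is_gf (nat_conv c d) q (A * B)%C.
Proof.
  intros (HRe & HIm & Habs) (GRe & GIm & Gabs).
  assert (abs_conv : forall (e : nat -> nat) (part : C -> R),
    ex_series (fun n => INR (e n) * Cmod q ^ n) -> (forall z, Rabs (part z) <= Cmod z) ->
    ex_series (fun n => Rabs (INR (e n) * part (q ^ n)%C))).
  { intros e part He Hpart.
    apply (ex_series_Rabs_le _ (fun n => INR (e n) * Cmod q ^ n)); [intros n | exact He].
    rewrite Rabs_mult, (Rabs_pos_eq _ (pos_INR _)).
    apply Rmult_le_compat_l; [apply pos_INR | apply Rabs_part_pow_le, Hpart]. }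
  pose proof (is_series_mult _ _ _ _ HRe GRe (abs_conv c Re Habs re_le_Cmod)
    (abs_conv d Re Gabs re_le_Cmod)) as ReRe.
  pose proof (is_series_mult _ _ _ _ HIm GIm (abs_conv c Im Habs im_le_Cmod)
    (abs_conv d Im Gabs im_le_Cmod)) as ImIm.
  pose proof (is_series_mult _ _ _ _ HRe GIm (abs_conv c Re Habs re_le_Cmod)
    (abs_conv d Im Gabs im_le_Cmod)) as ReIm.
  pose proof (is_series_mult _ _ _ _ HIm GRe (abs_conv c Im Habs im_le_Cmod)
    (abs_conv d Re Gabs re_le_Cmod)) as ImRe.
  assert (pow_split : forall n k, (k <= n)%nat -> (q ^ n = q ^ k * q ^ (n - k))%C).
  { intros n k Hk. rewrite <- Cpow_add_r. f_equal. lia. }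
  repeat split.
  - rewrite Re_mult. eapply is_series_ext; [| exact (is_series_minus _ _ _ _ ReRe ImIm)].
    intros n. cbv beta. rewrite INR_nat_conv, (Rmult_comm (sum_f_R0 _ _)), scal_sum.
    change (plus ?x (opp ?y)) with (x - y). rewrite <- minus_sum. apply sum_eq.
    intros k Hk. rewrite (pow_split n k Hk), Re_mult. ring.
  - rewrite Im_mult. eapply is_series_ext; [| exact (is_series_plus _ _ _ _ ReIm ImRe)].
    intros n. cbv beta. rewrite INR_nat_conv, (Rmult_comm (sum_f_R0 _ _)), scal_sum.
    change (plus ?x ?y) with (x + y). rewrite <- plus_sum. apply sum_eq.
    intros k Hk. rewrite (pow_split n k Hk), Im_mult. ring.
  - assert (Hq : 0 <= Cmod q) by apply Cmod_ge_0.
    eexists. eapply is_series_ext; [| apply (is_series_mult_pos _ _ _ _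
      (Series_correct _ Habs) (Series_correct _ Gabs))].
    + intros n. cbv beta. rewrite INR_nat_conv, (Rmult_comm (sum_f_R0 _ _)), scal_sum. apply sum_eq.
      intros k Hk. replace (Cmod q ^ n) with (Cmod q ^ k * Cmod q ^ (n - k))
        by (rewrite <- pow_add; f_equal; lia). ring.
    + intros n. apply Rmult_le_pos; [apply pos_INR | apply pow_le, Hq].
    + intros n. apply Rmult_le_pos; [apply pos_INR | apply pow_le, Hq].
Qed.

Definition sum_lt (u : nat -> R) (K : nat) : R :=
  match K with O => 0 | S K' => sum_n u K' end.

Lemma sum_lt_S u K : sum_lt u (S K) = sum_lt u K + u K.
Proof. destruct K; cbn [sum_lt]; [rewrite sum_O; ring | rewrite sum_Sn; reflexivity]. Qed.

Lemma pow_le_anti r i j : 0 <= r <= 1 -> (i <= j)%nat -> r ^ j <= r ^ i.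
Proof.
  intros Hr Hij. replace j with (i + (j - i))%nat by lia. rewrite pow_add.
  pose proof (pow_incr r 1 (j - i) Hr) as Hle. rewrite pow1 in Hle.
  pose proof (pow_le r i (proj1 Hr)). nra.
Qed.

Section RangeIndicator.

Variable E : nat -> nat.
Hypothesis E_incr : strictly_increasing E.

Lemma sum_lt_range_ind (w : nat -> R) N : exists K,
  (forall k, (k < K)%nat <-> (E k < N)%nat) /\
  sum_lt (fun n => INR (range_ind E n) * w n) N = sum_lt (fun k => w (E k)) K.
Proof.
  induction N as [| N (K & HK & Hsum)].
  - exists 0%nat. split; [intros k; lia | reflexivity].
  - rewrite sum_lt_S, Hsum. destruct (range_indP E E_incr N) as [[-> [k Hk]] | [-> Hk]].
    + assert (k = K) as ->.
      { destruct (Nat.lt_trichotomy k K) as [Hlt | [-> | Hlt]];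
          [apply HK in Hlt; lia | reflexivity |].
        pose proof (incr_lt E E_incr _ _ Hlt). assert (E K < N)%nat as HKN%HK by lia. lia. }
      exists (S K). split.
      * intros k. destruct (Nat.lt_trichotomy k K) as [Hlt | [-> | Hlt]].
        -- pose proof (proj1 (HK k) Hlt). lia.
        -- lia.
        -- pose proof (incr_lt E E_incr _ _ Hlt). lia.
      * rewrite sum_lt_S, Hk. cbn [INR]. ring.
    + exists K. split; [intros k; rewrite HK; specialize (Hk k); lia | cbn [INR]; ring].
Qed.

Lemma is_series_range_ind (w : nat -> R) l :
  is_series (fun k => w (E k)) l -> is_series (fun n => INR (range_ind E n) * w n) l.
Proof.
  intros Hw. apply filterlim_locally. intros eps.
  destruct (proj1 (filterlim_locally _ _) Hw eps) as [K0 HK0].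
  exists (E K0). intros N HN. destruct (sum_lt_range_ind w (S N)) as (K & HK & Hsum).
  change (ball l eps (sum_lt (fun n => INR (range_ind E n) * w n) (S N))). rewrite Hsum.
  assert (K0 < K)%nat by (apply HK; lia).
  destruct K as [| K]; [lia |]. apply HK0. lia.
Qed.

Lemma is_gf_range_ind q : Cmod q < 1 ->
  is_gf (range_ind E) q (CSeries (fun k => (q ^ E k)%C)).
Proof.
  intros Hq. assert (Hq0 : 0 <= Cmod q) by apply Cmod_ge_0.
  assert (part_E : forall part : C -> R, (forall z, Rabs (part z) <= Cmod z) ->
    ex_series (fun k => part (q ^ E k)%C)).
  { intros part Hpart. apply (ex_series_geom_le _ (Cmod q)); [lra |]. intros k.
    eapply Rle_trans; [apply Rabs_part_pow_le, Hpart |].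
    apply pow_le_anti; [lra | apply incr_ge_id, E_incr]. }
  unfold CSeries. repeat split; cbn [Re Im fst snd].
  - apply (is_series_range_ind (fun n => Re (q ^ n)%C)), Series_correct, part_E, re_le_Cmod.
  - apply (is_series_range_ind (fun n => Im (q ^ n)%C)), Series_correct, part_E, im_le_Cmod.
  - apply (ex_series_geom_le _ (Cmod q)); [lra |]. intros n.
    pose proof (le_INR _ _ (range_ind_le_1 E E_incr n)). pose proof (pos_INR (range_ind E n)).
    pose proof (pow_le _ n Hq0). rewrite Rabs_right by nra. cbn [INR] in *. nra.
Qed.

End RangeIndicator.

Lemma is_series_of_is_gf c q L : is_gf c q L -> is_series (fun n => (INR (c n) * q ^ n)%C) L.
Proof.
  intros (HRe & HIm & _). apply is_series_C.
  - eapply is_series_ext; [| exact HRe]. intros n. cbv beta. rewrite Re_mult. cbn. ring.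
  - eapply is_series_ext; [| exact HIm]. intros n. cbv beta. rewrite Im_mult. cbn. ring.
Qed.

Lemma CSeries_ext u v : (forall k, u k = v k) -> CSeries u = CSeries v.
Proof.
  intros Huv. unfold CSeries. f_equal; apply Series_ext; intros k; rewrite Huv; reflexivity.
Qed.

Lemma is_gf_sq_count m q : (0 < m)%nat -> Cmod q < 1 ->
  is_gf (sq_count m) q (ramanujan_phi (q ^ m)%C).
Proof.
  intros Hm Hq. apply is_gf_plus.
  - rewrite (CSeries_ext _ (fun k => q ^ sq_seq m k)%C) by (intros k; symmetry; apply Cpow_mult_r).
    apply is_gf_range_ind; [apply sq_seq_incr, Hm | exact Hq].
  - rewrite (CSeries_ext _ (fun k => q ^ sq_succ_seq m k)%C)
      by (intros k; symmetry; apply Cpow_mult_r).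
    apply is_gf_range_ind; [apply sq_succ_seq_incr, Hm | exact Hq].
Qed.

Lemma is_gf_tri_count m q : (0 < m)%nat -> Cmod q < 1 ->
  is_gf (tri_count m) q (ramanujan_psi (q ^ m)%C + ramanujan_psi (q ^ m)%C)%C.
Proof.
  intros Hm Hq. unfold ramanujan_psi.
  rewrite (CSeries_ext _ (fun k => q ^ tri_seq m k)%C) by (intros k; symmetry; apply Cpow_mult_r).
  apply is_gf_plus; apply is_gf_range_ind; solve [apply tri_seq_incr, Hm | exact Hq].
Qed.

Lemma is_series_double_sq_tri_card (k1 k2 k3 : nat) (f : nat -> nat) q :
  (0 < k1)%nat -> (0 < k2)%nat -> (0 < k3)%nat -> Cmod q < 1 ->
  (forall n m, has_card (fun p => sq_tri_form (Z.of_nat k1) (Z.of_nat k2) (Z.of_nat k3) p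
                                  = Z.of_nat n) m -> f n = (2 * m)%nat) ->
  is_series (fun n => (INR (f n) * q ^ n)%C)
    (8 * ramanujan_phi (q ^ k1)%C * ramanujan_psi (q ^ k2)%C * ramanujan_psi (q ^ k3)%C)%C.
Proof.
  intros H1 H2 H3 Hq Hf.
  set (phi := ramanujan_phi (q ^ k1)%C). set (psi2 := ramanujan_psi (q ^ k2)%C).
  set (psi3 := ramanujan_psi (q ^ k3)%C).
  assert (G : is_gf
    (fun n => 2 * nat_conv (nat_conv (sq_count k1) (tri_count k2)) (tri_count k3) n)%nat q
    (INR 2 * (phi * (psi2 + psi2) * (psi3 + psi3)))%C).
  { apply is_gf_scal, is_gf_conv; [apply is_gf_conv |];
      [apply is_gf_sq_count | apply is_gf_tri_count | apply is_gf_tri_count]; assumption. }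
  replace (INR 2) with 2 in G by (cbn; ring).
  replace (8 * phi * psi2 * psi3)%C with (2 * (phi * (psi2 + psi2) * (psi3 + psi3)))%C by ring.
  apply is_series_of_is_gf. eapply is_gf_ext; [| exact G].
  intros n. symmetry. apply Hf, fiber_card_sq_tri_form; assumption.
Qed.

Theorem lemma4p1 (a b : nat) (ha : (0 < a)%nat) (hb : (0 < b)%nat)
  (hodd : Nat.odd a = true) :
  (forall n : nat, (0 < n)%nat ->
     t a (3 * a) (4 * b) (4 * n + 6 * a) = (2 * t a (12 * a) b n)%nat /\
     t a (3 * a) (4 * b) (4 * n + 3 * a) = (2 * t (3 * a) (4 * a) b n)%nat) /\
  (forall q : C, (Cmod q < 1)%R ->
     is_series (fun n => (RtoC (INR (t a (3 * a) (4 * b) (4 * n))) * Cpow q n)%C)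
       (8 * ramanujan_phi (Cpow q (6 * a)) * ramanujan_psi (Cpow q a)
          * ramanujan_psi (Cpow q b))%C /\
     is_series (fun n => (RtoC (INR (t a (3 * a) (4 * b) (4 * n + a))) * Cpow q n)%C)
       (8 * ramanujan_phi (Cpow q (2 * a)) * ramanujan_psi (Cpow q (3 * a))
          * ramanujan_psi (Cpow q b))%C).
Proof.
  split.
  - intros n _. split; [apply t_4n_6a | apply t_4n_3a]; assumption.
  - intros q Hq. split; apply is_series_double_sq_tri_card; try lia; try exact Hq;
      intros n m Hm; [apply t_4n | apply t_4n_a]; assumption.
Qed.
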